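(* Let $\mathscr T$ be a functor satisfying (T1)–(T4), and let $\Gamma\colon\mathbb{COL}\to\mathscr T\mathbb{ODA}$ and $\Psi\colon\mathscr T\mathbb{ODA}\to\mathbb{COL}$ be as described below. For each complete orthomodular lattice $\mathcal M$ define $\mu_{\mathcal M}\colon\mathcal M\to\Psi(\Gamma(\mathcal M))$ by $\mu_{\mathcal M}(m)=\{\pi_m\}$. Then $\mu=(\mu_{\mathcal M})_{\mathcal M}$ is a natural isomorphism $1_{\mathbb{COL}}\Rightarrow\Psi\circ\Gamma$.
   Context: $\Gamma(\mathcal M)=\mathscr P(\mathscr T(\mathbf{Lin}(\mathcal M)))$, $\Gamma(k)(A)=\{k\circ a\circ k^{-1}\mid a\in A\}$; $\Psi(\mathfrak K)=(\widetilde K,\preceq,{}^\perp)$, $\Psi(\phi)=\phi|_{\widetilde K}$. An involutive unital quantale is $(Q,\bigsqcup,\odot,{}^*,e)$: complete join-semilattice $Q$, associative $\odot$ distributing over arbitrary joins in each argument, unit $e$, ${}^*$ with $x^{**}=x$, $(x\odot y)^*=y^*\odot x^*$, $(\bigsqcup x_i)^*=\bigsqcup x_i^*$. An involutive generalized dynamic algebra (IDA) is such a quantale with ${\sim}\colon K\to K$ satisfying, for all $x,y$ and families $(x_i)$: ${\sim}(x\odot{\sim}{\sim}y)={\sim}(x\odot y)$; ${\sim}(\bigsqcup{\sim}{\sim}x_i)={\sim}(\bigsqcup x_i)$; $({\sim}x)^*={\sim}x$; ${\sim}{\sim}({\sim}{\sim}x\odot y)={\sim}({\sim}x\sqcup{\sim}({\sim}x\sqcup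 y))$. Test set $\widetilde K=\{{\sim}k\}$; $\bigvee W={\sim}{\sim}\bigsqcup W$; $w^\perp={\sim}w$; $k\preceq l$ iff $\bigvee\{k,l\}=l$; $k\bullet v={\sim}{\sim}(k\odot v)$; $k\equiv l$ iff $k\bullet w=l\bullet w$ for all $w\in\widetilde K$. IDA morphisms preserve arbitrary joins, $\odot$, ${}^*$, unit, ${\sim}$ (category $\mathbb{IDA}$); semi-Foulis means $(\widetilde K,\preceq,{}^\perp)$ is a complete orthomodular lattice. $\mathbb{IM}$: involutive monoids and homomorphisms. For a complete orthomodular lattice $\mathcal M$: $\pi_m(x)=m\wedge(m^\perp\vee x)$; $\mathbf{Lin}(\mathcal M)$ is the set of maps $f$ admitting $f^*$ with $f(x)\le y^\perp\iff x\le f^*(y)^\perp$, an IDA under pointwise joins, composition, ${}^*$, $\mathrm{id}$, ${\sim}f=\pi_{f(1)^\perp}$. For an involutive submonoid $L\supseteq\{\pi_m\}$, $\mathscr P(L)$ is the IDA of subsets of $L$ with union, setwise composition and involution, unit $\{\mathrm{id}\}$, ${\sim}A=\{\pi_{(\bigvee_{a\in A}a(1))^\perp}\}$. $\mathscr T\colon\mathbb{IDA}\to\mathbb{IM}$ satisfies: (T1) $\widetilde K\subseteq\mathscr T(K)\subseteq K$, $\mathscr T(K)$ an involutive submonoid; (T2) for semi-Foulis $\mathfrak K$ with $s=t\iff s\equiv t$ on $\mathscr T(K)$, $k\mapsto k\bullet(-)$ is an isomorphism $\mathscr T(\mathfrak K)\to\mathscr T(\mathbf{Lin}(\widetilde{\mathfrak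 K}))$; (T3) $f\mapsto\{f\}$ is an isomorphism $\mathscr T(\mathbf{Lin}(\mathcal M))\to\mathscr T(\mathscr P(\mathscr T(\mathbf{Lin}(\mathcal M))))$; (T4) $\mathscr T(f)$ is the restriction of $f$. A $\mathscr T$-based orthomodular dynamic algebra is an IDA with: (TODA1) $(\widetilde K,\preceq,{}^\perp)$ a complete orthomodular lattice; (TODA2) every $A$ with $\mathscr T(K)\subseteq A\subseteq K$ closed under $\odot$, ${}^*$, arbitrary joins equals $K$; (TODA3) for $S,T\subseteq\mathscr T(K)$, $\bigsqcup S=\bigsqcup T$ iff $S=T$; (TODA4) for $s,t\in\mathscr T(K)$, $s=t$ iff $s\equiv t$. $\mathscr T\mathbb{ODA}$: these objects with bijective IDA morphisms. $\mathbb{COL}$: complete orthomodular lattices with ortholattice isomorphisms (bijections $g$ with $m\le n\iff g(m)\le g(n)$, $g(m^\perp)=g(m)^\perp$). *)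

From Stdlib Require Import ClassicalEpsilon.
Unset Implicit Arguments.

Definition pair2 {X : Type} (x y : X) : X -> Prop := fun z => z = x \/ z = y.
Definition image {X Y : Type} (f : X -> Y) (S : X -> Prop) : Y -> Prop :=
  fun y => exists x, S x /\ y = f x.

Definition is_lub {X : Type} (D : X -> Prop) (le : X -> X -> Prop)
  (S : X -> Prop) (u : X) : Prop :=
  D u /\ (forall x, S x -> le x u) /\
  (forall v, D v -> (forall x, S x -> le x v) -> le u v).
Definition is_glb {X : Type} (D : X -> Prop) (le : X -> X -> Prop)
  (S : X -> Prop) (u : X) : Prop :=
  D u /\ (forall x, S x -> le u x) /\
  (forall v, D v -> (forall x, S x -> le v x) -> le v u).

Record is_coml_on {X : Type} (D : X -> Prop) (le : X -> X -> Prop)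
  (oc : X -> X) : Prop := {
  coml_refl : forall x, D x -> le x x;
  coml_anti : forall x y, D x -> D y -> le x y -> le y x -> x = y;
  coml_trans : forall x y z, D x -> D y -> D z -> le x y -> le y z -> le x z;
  coml_lub : forall S, (forall x, S x -> D x) -> exists u, is_lub D le S u;
  coml_oc_closed : forall x, D x -> D (oc x);
  coml_oc_invol : forall x, D x -> oc (oc x) = x;
  coml_oc_anti : forall x y, D x -> D y -> le x y -> le (oc y) (oc x);
  coml_oc_top : forall x t, D x -> is_lub D le D t ->
                 is_lub D le (pair2 x (oc x)) t;
  coml_orthomod : forall x y m, D x -> D y -> le x y ->
                 is_glb D le (pair2 y (oc x)) m -> is_lub D le (pair2 x m) y
}.

(* A complete orthomodular lattice, presented as a subset of a type. *)
Record col : Type := {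
  ccar : Type;
  cdom : ccar -> Prop;
  cle : ccar -> ccar -> Prop;
  coc : ccar -> ccar;
  cax : is_coml_on cdom cle coc
}.

Definition pt (M : col) : Type := {x : ccar M | cdom M x}.
Definition ple (M : col) (x y : pt M) : Prop := cle M (proj1_sig x) (proj1_sig y).
Definition poc (M : col) (x : pt M) : pt M :=
  exist _ (coc M (proj1_sig x)) (coml_oc_closed _ _ _ (cax M) _ (proj2_sig x)).

Definition pt_inh (M : col) : inhabited (pt M) :=
  match coml_lub _ _ _ (cax M) (fun _ => False) (fun x (H : False) => False_ind _ H)
  with ex_intro _ u (conj Hu _) => inhabits (exist _ u Hu) end.

Definition psup (M : col) (S : pt M -> Prop) : pt M :=
  epsilon (pt_inh M) (fun u => is_lub (fun _ => True) (ple M) S u).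
Definition pinf (M : col) (S : pt M -> Prop) : pt M :=
  psup M (fun x => forall y, S y -> ple M x y).
Definition ptop (M : col) : pt M := psup M (fun _ => True).
Definition pjoin2 (M : col) (a b : pt M) : pt M := psup M (pair2 a b).
Definition pmeet2 (M : col) (a b : pt M) : pt M := pinf M (pair2 a b).

Definition sasaki (M : col) (m : pt M) : pt M -> pt M :=
  fun x => pmeet2 M m (pjoin2 M (poc M m) x).

Definition col_iso (M N : col) (g : pt M -> pt N) (h : pt N -> pt M) : Prop :=
  (forall x, h (g x) = x) /\ (forall y, g (h y) = y) /\
  (forall m n, ple M m n <-> ple N (g m) (g n)) /\
  (forall m, g (poc M m) = poc N (g m)).

Record ida : Type := {
  icar : Type;
  idom : icar -> Prop;
  ijoin : (icar -> Prop) -> icar;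
  imul : icar -> icar -> icar;
  istar : icar -> icar;
  ione : icar;
  itil : icar -> icar
}.

Definition ida_le (K : ida) (x y : icar K) : Prop := ijoin K (pair2 x y) = y.
Definition sub_dom (K : ida) (S : icar K -> Prop) : Prop :=
  forall x, S x -> idom K x.

Record is_ida (K : ida) : Prop := {
  ida_one_dom : idom K (ione K);
  ida_mul_dom : forall x y, idom K x -> idom K y -> idom K (imul K x y);
  ida_star_dom : forall x, idom K x -> idom K (istar K x);
  ida_til_dom : forall x, idom K x -> idom K (itil K x);
  ida_join_dom : forall S, sub_dom K S -> idom K (ijoin K S);
  ida_le_refl : forall x, idom K x -> ida_le K x x;
  ida_le_anti : forall x y, idom K x -> idom K y ->
                ida_le K x y -> ida_le K y x -> x = y;
  ida_le_trans : forall x y z, idom K x -> idom K y -> idom K z ->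
                ida_le K x y -> ida_le K y z -> ida_le K x z;
  ida_join_lub : forall S, sub_dom K S -> is_lub (idom K) (ida_le K) S (ijoin K S);
  ida_mulA : forall x y z, idom K x -> idom K y -> idom K z ->
             imul K (imul K x y) z = imul K x (imul K y z);
  ida_mul_joinr : forall x S, idom K x -> sub_dom K S ->
             imul K x (ijoin K S) = ijoin K (image (imul K x) S);
  ida_mul_joinl : forall x S, idom K x -> sub_dom K S ->
             imul K (ijoin K S) x = ijoin K (image (fun s => imul K s x) S);
  ida_mul1l : forall x, idom K x -> imul K (ione K) x = x;
  ida_mul1r : forall x, idom K x -> imul K x (ione K) = x;
  ida_starK : forall x, idom K x -> istar K (istar K x) = x;
  ida_star_mul : forall x y, idom K x -> idom K y ->
             istar K (imul K x y) = imul K (istar K y) (istar K x);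
  ida_star_join : forall S, sub_dom K S ->
             istar K (ijoin K S) = ijoin K (image (istar K) S);
  ida_til1 : forall x y, idom K x -> idom K y ->
             itil K (imul K x (itil K (itil K y))) = itil K (imul K x y);
  ida_til2 : forall S, sub_dom K S ->
             itil K (ijoin K (image (fun x => itil K (itil K x)) S)) = itil K (ijoin K S);
  ida_til3 : forall x, idom K x -> istar K (itil K x) = itil K x;
  ida_til4 : forall x y, idom K x -> idom K y ->
             itil K (itil K (imul K (itil K (itil K x)) y)) =
             itil K (ijoin K (pair2 (itil K x)
                        (itil K (ijoin K (pair2 (itil K x) y)))))
}.

Definition ida_morph (K K' : ida) (f : icar K -> icar K') : Prop :=
  (forall x, idom K x -> idom K' (f x)) /\
  (forall S, sub_dom K S -> f (ijoin K S) = ijoin K' (image f S)) /\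
  (forall x y, idom K x -> idom K y -> f (imul K x y) = imul K' (f x) (f y)) /\
  (forall x, idom K x -> f (istar K x) = istar K' (f x)) /\
  f (ione K) = ione K' /\
  (forall x, idom K x -> f (itil K x) = itil K' (f x)).

Definition test (K : ida) (k : icar K) : Prop := exists j, idom K j /\ k = itil K j.
Definition tle (K : ida) (k l : icar K) : Prop :=
  itil K (itil K (ijoin K (pair2 k l))) = l.
Definition bullet (K : ida) (k v : icar K) : icar K := itil K (itil K (imul K k v)).
Definition tequiv (K : ida) (k l : icar K) : Prop :=
  forall w, test K w -> bullet K k w = bullet K l w.
Definition semiFoulis (K : ida) : Prop := is_coml_on (test K) (tle K) (itil K).

(* Psi on objects: the complete OML of tests of a semi-Foulis IDA *)
Definition tests_col (K : ida) (HF : semiFoulis K) : col :=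
  {| ccar := icar K; cdom := test K; cle := tle K; coc := itil K; cax := HF |}.

Definition adjoint (M : col) (f g : pt M -> pt M) : Prop :=
  forall x y, ple M (f x) (poc M y) <-> ple M x (poc M (g y)).

Definition Lin (M : col) : ida := {|
  icar := pt M -> pt M;
  idom := fun f => exists g, adjoint M f g;
  ijoin := fun F x => psup M (image (fun f => f x) F);
  imul := fun f g x => f (g x);
  istar := fun f => epsilon (inhabits f) (fun g => adjoint M f g);
  ione := fun x => x;
  itil := fun f => sasaki M (poc M (f (ptop M)))
|}.

Definition Pow (M : col) (L : (pt M -> pt M) -> Prop) : ida := {|
  icar := (pt M -> pt M) -> Prop;
  idom := fun A => forall f, A f -> L f;
  ijoin := fun S f => exists A, S A /\ A f;
  imul := fun A B h => exists a b, A a /\ B b /\ h = (fun x => a (b x));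
  istar := fun A => image (istar (Lin M)) A;
  ione := fun h => h = (fun x => x);
  itil := fun A h =>
    h = sasaki M (poc M (psup M (image (fun a : pt M -> pt M => a (ptop M)) A)))
|}.

Definition single {X : Type} (x : X) : X -> Prop := fun y => y = x.

(* The functor T : IDA -> IM, given by its object part T(K) ⊆ K
   (its morphism part is restriction, (T4)). *)
Definition Tfun : Type := forall K : ida, icar K -> Prop.

Definition T1 (T : Tfun) : Prop :=
  forall K : ida, is_ida K ->
    (forall k, test K k -> T K k) /\
    (forall k, T K k -> idom K k) /\
    T K (ione K) /\
    (forall x y, T K x -> T K y -> T K (imul K x y)) /\
    (forall x, T K x -> T K (istar K x)).

Definition T2 (T : Tfun) : Prop :=
  forall (K : ida) (HK : is_ida K) (HF : semiFoulis K),
    (forall s t, T K s -> T K t -> (s = t <-> tequiv K s t)) ->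
    exists Phi : icar K -> (pt (tests_col K HF) -> pt (tests_col K HF)),
      (forall k w, T K k -> proj1_sig (Phi k w) = bullet K k (proj1_sig w)) /\
      (forall k, T K k -> T (Lin (tests_col K HF)) (Phi k)) /\
      (forall k l, T K k -> T K l -> Phi k = Phi l -> k = l) /\
      (forall f, T (Lin (tests_col K HF)) f -> exists k, T K k /\ Phi k = f) /\
      (forall k l, T K k -> T K l ->
         Phi (imul K k l) = imul (Lin (tests_col K HF)) (Phi k) (Phi l)) /\
      (forall k, T K k -> Phi (istar K k) = istar (Lin (tests_col K HF)) (Phi k)) /\
      Phi (ione K) = ione (Lin (tests_col K HF)).

Definition T3 (T : Tfun) : Prop :=
  forall M : col,
    let L := Lin M in
    let P := Pow M (T L) in
    (forall f, T L f -> T P (single f)) /\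
    (forall f g, T L f -> T L g -> single f = single g -> f = g) /\
    (forall A, T P A -> exists f, T L f /\ A = single f) /\
    (forall f g, T L f -> T L g ->
       single (imul L f g) = imul P (single f) (single g)) /\
    (forall f, T L f -> single (istar L f) = istar P (single f)) /\
    single (ione L) = ione P.

Definition T4 (T : Tfun) : Prop :=
  forall (K K' : ida) (f : icar K -> icar K'),
    is_ida K -> is_ida K' -> ida_morph K K' f ->
    forall x, T K x -> T K' (f x).

Definition Gam (T : Tfun) (M : col) : ida := Pow M (T (Lin M)).

(* Gamma(g)(A) = { g o a o g^{-1} | a in A }, h = g^{-1} *)
Definition Gam_map (M N : col) (g : pt M -> pt N) (h : pt N -> pt M)
  (A : (pt M -> pt M) -> Prop) : (pt N -> pt N) -> Prop :=
  fun f => exists a, A a /\ f = (fun x => g (a (h x))).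

Definition mu (M : col) (m : pt M) : (pt M -> pt M) -> Prop := single (sasaki M m).

(** The Sasaki projection [pi_m] is self-adjoint (this is where orthomodularity
    enters) and satisfies [pi_m 1 = m], so it is a test of the IDA [Lin M];
    by (T1) it lies in [T (Lin M)], and [{pi_m}] is a test of [Gamma M].  The
    complement and the joins of tests of [Gamma M] only depend on the values of
    their elements at [1], so [m |-> {pi_m}] is an ortholattice isomorphism onto
    the tests.  An ortholattice isomorphism preserves the lattice polynomial
    [m /\ (m^perp \/ x)], which gives naturality.  Only (T1) is needed. *)

From Stdlib Require Import ClassicalEpsilon FunctionalExtensionality.
From Stdlib Require Import PropExtensionality ProofIrrelevance.

Section ComplOrthomodularLattice.
Variable M : col.
Local Notation le := (ple M).
Local Notation oc := (poc M).

Lemma pt_eq (x y : pt M) : proj1_sig x = proj1_sig y -> x = y.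
Proof. destruct x, y; simpl; intros ->; f_equal; apply proof_irrelevance. Qed.

Lemma ple_refl x : le x x.
Proof. exact (coml_refl _ _ _ (cax M) _ (proj2_sig x)). Qed.

Lemma ple_anti x y : le x y -> le y x -> x = y.
Proof.
  intros Hxy Hyx; apply pt_eq.
  exact (coml_anti _ _ _ (cax M) _ _ (proj2_sig x) (proj2_sig y) Hxy Hyx).
Qed.

Lemma ple_trans x y z : le x y -> le y z -> le x z.
Proof.
  exact (coml_trans _ _ _ (cax M) _ _ _ (proj2_sig x) (proj2_sig y) (proj2_sig z)).
Qed.

Lemma poc_invol x : oc (oc x) = x.
Proof. apply pt_eq; exact (coml_oc_invol _ _ _ (cax M) _ (proj2_sig x)). Qed.

Lemma poc_anti x y : le x y -> le (oc y) (oc x).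
Proof. exact (coml_oc_anti _ _ _ (cax M) _ _ (proj2_sig x) (proj2_sig y)). Qed.

Lemma ple_poc_sym a b : le a (oc b) <-> le b (oc a).
Proof. split; intro H; apply poc_anti in H; rewrite poc_invol in H; exact H. Qed.

Lemma ple_eq_from_le x y : (forall c, le x c <-> le y c) -> x = y.
Proof. intros H; apply ple_anti; [apply H, ple_refl | apply H, ple_refl]. Qed.

Lemma ple_eq_from_ge x y : (forall c, le c x <-> le c y) -> x = y.
Proof. intros H; apply ple_anti; [apply H, ple_refl | apply H, ple_refl]. Qed.

Lemma psup_spec S : is_lub (fun _ => True) le S (psup M S).
Proof.
  unfold psup; apply epsilon_spec.
  destruct (coml_lub _ _ _ (cax M) (fun c => exists p : pt M, S p /\ proj1_sig p = c))
    as [u [Du [Hub Hleast]]].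
  { intros x [p [_ <-]]; exact (proj2_sig p). }
  exists (exist _ u Du); split; [trivial | split].
  - intros x Sx; apply Hub; exists x; auto.
  - intros v _ Hv; apply Hleast; [exact (proj2_sig v) |].
    intros c [p [Sp <-]]; apply Hv, Sp.
Qed.

Lemma ple_psup S x : S x -> le x (psup M S).
Proof. apply (psup_spec S). Qed.

Lemma psup_le_iff S c : le (psup M S) c <-> forall x, S x -> le x c.
Proof.
  split.
  - intros H x Sx; exact (ple_trans _ _ _ (ple_psup S x Sx) H).
  - intros H; apply (psup_spec S); auto.
Qed.

Lemma psup_image_le_iff {A : Type} (F : A -> pt M) S c :
  le (psup M (image F S)) c <-> forall f, S f -> le (F f) c.
Proof.
  rewrite psup_le_iff; unfold image; split.
  - intros H f Sf; apply H; eauto.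
  - intros H x [f [Sf ->]]; auto.
Qed.

Lemma psup_ext A B : (forall z, A z <-> B z) -> psup M A = psup M B.
Proof. intros H; apply ple_eq_from_le; intro c; rewrite !psup_le_iff; firstorder. Qed.

Lemma psup_image_single {A : Type} (F : A -> pt M) a : psup M (image F (single a)) = F a.
Proof.
  apply ple_eq_from_le; intro c; rewrite psup_image_le_iff; unfold single; split.
  - intros H; apply H; reflexivity.
  - intros H f ->; exact H.
Qed.

Lemma ple_pinf_iff S c : le c (pinf M S) <-> forall y, S y -> le c y.
Proof.
  split.
  - intros H y Sy; apply (ple_trans _ _ _ H), psup_le_iff.
    intros x Hx; apply Hx, Sy.
  - intros H; apply ple_psup, H.
Qed.

Lemma ple_ptop x : le x (ptop M).
Proof. apply ple_psup; trivial. Qed.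

Lemma pjoin2_le_iff a b c : le (pjoin2 M a b) c <-> le a c /\ le b c.
Proof.
  unfold pjoin2; rewrite psup_le_iff; unfold pair2; split.
  - intros H; split; apply H; auto.
  - intros [] x [-> | ->]; auto.
Qed.

Lemma ple_pmeet2_iff a b c : le c (pmeet2 M a b) <-> le c a /\ le c b.
Proof.
  unfold pmeet2; rewrite ple_pinf_iff; unfold pair2; split.
  - intros H; split; apply H; auto.
  - intros [] x [-> | ->]; auto.
Qed.

Lemma pjoin2C a b : pjoin2 M a b = pjoin2 M b a.
Proof. apply ple_eq_from_le; intro c; rewrite !pjoin2_le_iff; tauto. Qed.

Lemma pjoin2_ub_l a b : le a (pjoin2 M a b).
Proof. apply (pjoin2_le_iff a b _), ple_refl. Qed.

Lemma pjoin2_ub_r a b : le b (pjoin2 M a b).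
Proof. apply (pjoin2_le_iff a b _), ple_refl. Qed.

Lemma pmeet2_lb_l a b : le (pmeet2 M a b) a.
Proof. apply (ple_pmeet2_iff a b _), ple_refl. Qed.

Lemma pmeet2_lb_r a b : le (pmeet2 M a b) b.
Proof. apply (ple_pmeet2_iff a b _), ple_refl. Qed.

Lemma poc_pjoin2 a b : oc (pjoin2 M a b) = pmeet2 M (oc a) (oc b).
Proof.
  apply ple_eq_from_ge; intro c.
  rewrite ple_poc_sym, pjoin2_le_iff, ple_pmeet2_iff, !(ple_poc_sym c); tauto.
Qed.

Lemma poc_pmeet2 a b : oc (pmeet2 M a b) = pjoin2 M (oc a) (oc b).
Proof. rewrite <- (poc_invol (pjoin2 M _ _)), poc_pjoin2, !poc_invol; reflexivity. Qed.

Lemma orthomodular x y : le x y -> y = pjoin2 M x (pmeet2 M y (oc x)).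
Proof.
  intros Hxy; set (z := pmeet2 M y (oc x)).
  assert (Hglb : is_glb (cdom M) (cle M)
                   (pair2 (proj1_sig y) (coc M (proj1_sig x))) (proj1_sig z)).
  { split; [exact (proj2_sig z) | split].
    - intros c [-> | ->]; [apply pmeet2_lb_l | apply pmeet2_lb_r].
    - intros v Dv Hv; change (le (exist _ v Dv) z); apply ple_pmeet2_iff.
      split; apply Hv; [left | right]; reflexivity. }
  destruct (coml_orthomod _ _ _ (cax M) _ _ _ (proj2_sig x) (proj2_sig y) Hxy Hglb)
    as [_ [_ Hleast]].
  apply ple_anti.
  - apply Hleast; [exact (proj2_sig (pjoin2 M x z)) |].
    intros c [-> | ->]; [apply pjoin2_ub_l | apply pjoin2_ub_r].
  - apply pjoin2_le_iff; split; [exact Hxy | apply pmeet2_lb_l].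
Qed.

Lemma sasaki_ptop m : sasaki M m (ptop M) = m.
Proof.
  apply ple_anti; [apply pmeet2_lb_l |].
  apply ple_pmeet2_iff; split; [apply ple_refl |].
  exact (ple_trans _ _ _ (ple_ptop _) (pjoin2_ub_r _ _)).
Qed.

Lemma sasaki_le m x : le (sasaki M m x) m.
Proof. apply pmeet2_lb_l. Qed.

(* The orthomodular law, in its dual form. *)
Lemma sasaki_id b m : le b m -> sasaki M m b = b.
Proof.
  intros H; apply poc_anti, orthomodular in H.
  rewrite <- (poc_invol b) at 2; rewrite H; unfold sasaki.
  rewrite poc_pjoin2, poc_pmeet2, !poc_invol, (pjoin2C b); reflexivity.
Qed.

Lemma ple_poc_sasaki a m y : le a m -> (le a (oc y) <-> le a (oc (sasaki M m y))).
Proof.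
  intros Ham; unfold sasaki; rewrite poc_pmeet2, poc_pjoin2, poc_invol; split; intros H.
  - apply (ple_trans _ _ _ (proj2 (ple_pmeet2_iff m (oc y) a) (conj Ham H))), pjoin2_ub_r.
  - apply (ple_trans _ (pmeet2 M m (oc y))); [| apply pmeet2_lb_r].
    rewrite <- (sasaki_id (pmeet2 M m (oc y)) m (pmeet2_lb_l _ _)).
    apply ple_pmeet2_iff; auto.
Qed.

Lemma sasaki_adjoint m : adjoint M (sasaki M m) (sasaki M m).
Proof.
  intros x y.
  rewrite (ple_poc_sasaki _ m y (sasaki_le m x)), ple_poc_sym,
    <- (ple_poc_sasaki _ m x (sasaki_le m y)).
  apply ple_poc_sym.
Qed.

End ComplOrthomodularLattice.

Section LinIsIDA.
Variable M : col.
Local Notation le := (ple M).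
Local Notation oc := (poc M).
Local Notation L := (Lin M).

Lemma adjoint_sym f g : adjoint M f g -> adjoint M g f.
Proof. intros H x y; rewrite ple_poc_sym, <- (H y x), ple_poc_sym; tauto. Qed.

Lemma adjoint_unique f g1 g2 : adjoint M f g1 -> adjoint M f g2 -> g1 = g2.
Proof.
  intros H1 H2; apply functional_extensionality; intro y.
  rewrite <- (poc_invol M (g1 y)), <- (poc_invol M (g2 y)); f_equal.
  apply ple_eq_from_ge; intro c; rewrite <- (H1 c y), <- (H2 c y); tauto.
Qed.

Lemma adjoint_comp f f' g g' : adjoint M f f' -> adjoint M g g' ->
  adjoint M (fun z => f (g z)) (fun z => g' (f' z)).
Proof. intros Hf Hg a b; rewrite (Hf (g a) b), (Hg a (f' b)); tauto. Qed.

Lemma adjoint_psup f g S : adjoint M f g -> f (psup M S) = psup M (image f S).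
Proof.
  intros H; apply ple_eq_from_le; intro c.
  rewrite <- (poc_invol M c), (H _ (oc c)), psup_image_le_iff, psup_le_iff.
  split; intros K x Sx; [apply H | apply (proj1 (H x _))]; auto.
Qed.

Lemma Lin_star_adjoint f : idom L f -> adjoint M f (istar L f).
Proof. intros H; simpl; apply epsilon_spec, H. Qed.

Lemma Lin_join_app S p : ijoin L S p = psup M (image (fun f => f p) S).
Proof. reflexivity. Qed.

Lemma Lin_join2_app a b p : ijoin L (pair2 a b) p = pjoin2 M (a p) (b p).
Proof.
  apply psup_ext; intro z; unfold image, pair2; split.
  - intros [f [[-> | ->] ->]]; auto.
  - intros [-> | ->]; eauto.
Qed.

Lemma Lin_join_adjoint S : sub_dom L S ->
  adjoint M (ijoin L S) (fun y => psup M (image (fun f => istar L f y) S)).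
Proof.
  intros HS x y; rewrite Lin_join_app, psup_image_le_iff, ple_poc_sym, psup_image_le_iff.
  split; intros H f Sf.
  - apply ple_poc_sym, (Lin_star_adjoint f (HS f Sf)); auto.
  - apply (Lin_star_adjoint f (HS f Sf)), ple_poc_sym; auto.
Qed.

Lemma Lin_le_iff x y : ida_le L x y <-> forall p, le (x p) (y p).
Proof.
  unfold ida_le; split.
  - intros H p; rewrite <- H, Lin_join2_app; apply pjoin2_ub_l.
  - intros H; apply functional_extensionality; intro p; rewrite Lin_join2_app.
    apply ple_anti; [apply pjoin2_le_iff; split; [apply H | apply ple_refl] |].
    apply pjoin2_ub_r.
Qed.

Lemma Lin_til_sasaki f : itil L f = sasaki M (oc (f (ptop M))).
Proof. reflexivity. Qed.

Lemma Lin_til_ptop f : itil L f (ptop M) = oc (f (ptop M)).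
Proof. apply sasaki_ptop. Qed.

Lemma Lin_tiltil f : itil L (itil L f) = sasaki M (f (ptop M)).
Proof. rewrite Lin_til_sasaki, Lin_til_ptop, poc_invol; reflexivity. Qed.

Lemma Lin_til_ext f g : f (ptop M) = g (ptop M) -> itil L f = itil L g.
Proof. intros H; rewrite !Lin_til_sasaki, H; reflexivity. Qed.

Lemma Lin_dom_join S : sub_dom L S -> idom L (ijoin L S).
Proof. intros HS; eexists; apply Lin_join_adjoint, HS. Qed.

Lemma Lin_join_lub S : sub_dom L S -> is_lub (idom L) (ida_le L) S (ijoin L S).
Proof.
  intros HS; split; [apply Lin_dom_join, HS | split].
  - intros x Sx; apply Lin_le_iff; intro p; apply ple_psup; exists x; auto.
  - intros v _ Hv; apply Lin_le_iff; intro p; apply psup_image_le_iff.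
    intros f Sf; apply Lin_le_iff, Hv, Sf.
Qed.

Lemma Lin_mul_joinr x S : idom L x -> imul L x (ijoin L S) = ijoin L (image (imul L x) S).
Proof.
  intros [g Hg]; apply functional_extensionality; intro p; simpl.
  rewrite (adjoint_psup _ _ _ Hg); apply psup_ext; intro z; unfold image; split.
  - intros [w [[f [Sf ->]] ->]]; exists (fun q => x (f q)); split; eauto.
  - intros [h [[f [Sf ->]] ->]]; exists (f p); split; eauto.
Qed.

Lemma Lin_mul_joinl x S :
  imul L (ijoin L S) x = ijoin L (image (fun s => imul L s x) S).
Proof.
  apply functional_extensionality; intro p; simpl.
  apply psup_ext; intro z; unfold image; split.
  - intros [f [Sf ->]]; exists (fun q => f (x q)); split; eauto.
  - intros [h [[f [Sf ->]] ->]]; eauto.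
Qed.

Lemma Lin_starK x : idom L x -> istar L (istar L x) = x.
Proof.
  intros Hx; apply (adjoint_unique (istar L x)).
  - apply Lin_star_adjoint; exists x; apply adjoint_sym, Lin_star_adjoint, Hx.
  - apply adjoint_sym, Lin_star_adjoint, Hx.
Qed.

Lemma Lin_star_mul x y : idom L x -> idom L y ->
  istar L (imul L x y) = imul L (istar L y) (istar L x).
Proof.
  intros Hx Hy; apply (adjoint_unique (imul L x y) _ (imul L (istar L y) (istar L x))).
  - apply Lin_star_adjoint; destruct Hx as [gx Hx], Hy as [gy Hy].
    eexists; apply (adjoint_comp _ _ _ _ Hx Hy).
  - exact (adjoint_comp _ _ _ _ (Lin_star_adjoint x Hx) (Lin_star_adjoint y Hy)).
Qed.

Lemma Lin_star_join S : sub_dom L S -> istar L (ijoin L S) = ijoin L (image (istar L) S).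
Proof.
  intros HS; apply (adjoint_unique (ijoin L S)).
  - apply Lin_star_adjoint, Lin_dom_join, HS.
  - replace (ijoin L (image (istar L) S))
      with (fun y => psup M (image (fun f => istar L f y) S)).
    + apply Lin_join_adjoint, HS.
    + apply functional_extensionality; intro y; rewrite Lin_join_app.
      apply psup_ext; intro z; unfold image; split.
      * intros [f [Sf ->]]; exists (istar L f); split; eauto.
      * intros [h [[f [Sf ->]] ->]]; eauto.
Qed.

Lemma Lin_star_til x : istar L (itil L x) = itil L x.
Proof.
  apply (adjoint_unique (itil L x)); [| apply sasaki_adjoint].
  apply Lin_star_adjoint; eexists; apply sasaki_adjoint.
Qed.

Lemma Lin_til_mul_tiltil x y : itil L (imul L x (itil L (itil L y))) = itil L (imul L x y).
Proof.
  apply Lin_til_ext; change (x (itil L (itil L y) (ptop M)) = x (y (ptop M))).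
  rewrite Lin_tiltil, sasaki_ptop; reflexivity.
Qed.

Lemma Lin_til_join_tiltil S :
  itil L (ijoin L (image (fun x => itil L (itil L x)) S)) = itil L (ijoin L S).
Proof.
  apply Lin_til_ext; rewrite !Lin_join_app; apply psup_ext; intro z; unfold image; split.
  - intros [h [[f [Sf ->]] ->]]; exists f; rewrite Lin_tiltil, sasaki_ptop; auto.
  - intros [f [Sf ->]]; exists (itil L (itil L f)); split; [eauto |].
    rewrite Lin_tiltil, sasaki_ptop; reflexivity.
Qed.

Lemma Lin_tiltil_mul x y :
  itil L (itil L (imul L (itil L (itil L x)) y)) =
  itil L (ijoin L (pair2 (itil L x) (itil L (ijoin L (pair2 (itil L x) y))))).
Proof.
  apply Lin_til_ext.
  rewrite Lin_til_ptop, !Lin_join2_app, !Lin_til_ptop, Lin_join2_app, Lin_til_ptop.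
  change (oc (itil L (itil L x) (y (ptop M))) =
          pjoin2 M (oc (x (ptop M))) (oc (pjoin2 M (oc (x (ptop M))) (y (ptop M))))).
  rewrite Lin_tiltil; unfold sasaki; rewrite poc_pmeet2; reflexivity.
Qed.

Lemma Lin_is_ida : is_ida L.
Proof.
  split.
  - exists (fun x => x); intros x y; tauto.
  - intros x y [gx Hx] [gy Hy]; eexists; apply (adjoint_comp _ _ _ _ Hx Hy).
  - intros x Hx; exists x; apply adjoint_sym, Lin_star_adjoint, Hx.
  - intros x _; exists (itil L x); apply sasaki_adjoint.
  - exact Lin_dom_join.
  - intros x _; apply Lin_le_iff; intros; apply ple_refl.
  - intros x y _ _ Hxy Hyx; apply functional_extensionality; intro p.
    apply ple_anti; [apply Lin_le_iff, Hxy | apply Lin_le_iff, Hyx].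
  - intros x y z _ _ _ Hxy Hyz; apply Lin_le_iff; intro p.
    apply (ple_trans _ _ (y p)); [apply Lin_le_iff, Hxy | apply Lin_le_iff, Hyz].
  - exact Lin_join_lub.
  - reflexivity.
  - intros x S Hx _; apply Lin_mul_joinr, Hx.
  - intros x S _ _; apply Lin_mul_joinl.
  - reflexivity.
  - reflexivity.
  - exact Lin_starK.
  - exact Lin_star_mul.
  - exact Lin_star_join.
  - intros x y _ _; apply Lin_til_mul_tiltil.
  - intros S _; apply Lin_til_join_tiltil.
  - intros x _; apply Lin_star_til.
  - intros x y _ _; apply Lin_tiltil_mul.
Qed.

End LinIsIDA.

Lemma sasaki_Lin_test M m : test (Lin M) (sasaki M m).
Proof.
  exists (sasaki M (poc M m)); split; [eexists; apply sasaki_adjoint |].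
  rewrite Lin_til_sasaki, sasaki_ptop, poc_invol; reflexivity.
Qed.

Lemma sasaki_in_T T : T1 T -> forall M m, T (Lin M) (sasaki M m).
Proof.
  intros HT1 M m; destruct (HT1 (Lin M) (Lin_is_ida M)) as [Htests _].
  apply Htests, sasaki_Lin_test.
Qed.

Lemma mu_inj M m n : mu M m = mu M n -> m = n.
Proof.
  intros H; assert (Hm : single (sasaki M m) (sasaki M m)) by reflexivity.
  unfold mu in H; rewrite H in Hm.
  rewrite <- (sasaki_ptop M m), Hm, sasaki_ptop; reflexivity.
Qed.

Section GammaTests.
Variables (T : Tfun) (M : col).
Local Notation G := (Gam T M).

Lemma Gam_til A : itil G A = mu M (poc M (psup M (image (fun a => a (ptop M)) A))).
Proof. reflexivity. Qed.

Lemma Gam_til_mu m : itil G (mu M m) = mu M (poc M m).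
Proof. rewrite Gam_til; unfold mu; rewrite psup_image_single, sasaki_ptop; reflexivity. Qed.

Lemma Gam_test_mu k : test G k -> exists m, mu M m = k.
Proof. intros [j [_ ->]]; eexists; symmetry; apply Gam_til. Qed.

Lemma mu_Gam_test : T1 T -> forall m, test G (mu M m).
Proof.
  intros HT1 m; exists (mu M (poc M m)); split.
  - intros f ->; apply sasaki_in_T, HT1.
  - rewrite Gam_til_mu, poc_invol; reflexivity.
Qed.

Lemma Gam_tiltil_join_mu m n :
  itil G (itil G (ijoin G (pair2 (mu M m) (mu M n)))) = mu M (pjoin2 M m n).
Proof.
  rewrite (Gam_til (ijoin G _)), Gam_til_mu, poc_invol; f_equal.
  apply psup_ext; intro z; unfold image, pair2, mu, single; simpl; split.
  - intros [f [[A [[-> | ->] Hf]] ->]]; subst f; rewrite sasaki_ptop; auto.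
  - intros [-> | ->].
    + exists (sasaki M m); rewrite sasaki_ptop; split; [| reflexivity].
      exists (mu M m); split; [left |]; reflexivity.
    + exists (sasaki M n); rewrite sasaki_ptop; split; [| reflexivity].
      exists (mu M n); split; [right |]; reflexivity.
Qed.

Lemma mu_le_iff m n : ple M m n <-> tle G (mu M m) (mu M n).
Proof.
  unfold tle; rewrite Gam_tiltil_join_mu; split; intros H.
  - f_equal; apply ple_anti; [apply pjoin2_le_iff; split; [exact H | apply ple_refl] |].
    apply pjoin2_ub_r.
  - apply mu_inj in H; rewrite <- H; apply pjoin2_ub_l.
Qed.

End GammaTests.

Section Naturality.
Variables (M N : col) (g : pt M -> pt N) (h : pt N -> pt M).
Hypothesis iso : col_iso M N g h.

Lemma col_iso_le_l m c : ple N (g m) c <-> ple M m (h c).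
Proof. destruct iso as [_ [gh [Hle _]]]; rewrite (Hle m (h c)), gh; tauto. Qed.

Lemma col_iso_le_r m c : ple N c (g m) <-> ple M (h c) m.
Proof. destruct iso as [_ [gh [Hle _]]]; rewrite (Hle (h c) m), gh; tauto. Qed.

Lemma col_iso_pjoin2 a b : g (pjoin2 M a b) = pjoin2 N (g a) (g b).
Proof.
  apply ple_eq_from_le; intro c.
  rewrite col_iso_le_l, !pjoin2_le_iff, !col_iso_le_l; tauto.
Qed.

Lemma col_iso_pmeet2 a b : g (pmeet2 M a b) = pmeet2 N (g a) (g b).
Proof.
  apply ple_eq_from_ge; intro c.
  rewrite col_iso_le_r, !ple_pmeet2_iff, !col_iso_le_r; tauto.
Qed.

Lemma col_iso_sasaki m : (fun x => g (sasaki M m (h x))) = sasaki N (g m).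
Proof.
  destruct iso as [_ [gh [_ Hoc]]]; apply functional_extensionality; intro x.
  unfold sasaki; rewrite col_iso_pmeet2, col_iso_pjoin2, Hoc, gh; reflexivity.
Qed.

Lemma mu_natural m : Gam_map M N g h (mu M m) = mu N (g m).
Proof.
  apply functional_extensionality; intro f; apply propositional_extensionality.
  unfold Gam_map, mu, single; rewrite <- col_iso_sasaki; split.
  - intros [a [-> ->]]; reflexivity.
  - intros ->; eauto.
Qed.

End Naturality.

Theorem theorem6p2 :
  forall T : Tfun, T1 T -> T2 T -> T3 T -> T4 T ->
  (* each mu_M is a COL-isomorphism M -> Psi(Gamma(M)) *)
  (forall M : col,
     (forall m : pt M, test (Gam T M) (mu M m)) /\
     (forall m n : pt M, mu M m = mu M n -> m = n) /\
     (forall k, test (Gam T M) k -> exists m : pt M, mu M m = k) /\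
     (forall m n : pt M, ple M m n <-> tle (Gam T M) (mu M m) (mu M n)) /\
     (forall m : pt M, mu M (poc M m) = itil (Gam T M) (mu M m))) /\
  (* naturality: Psi(Gamma(g)) o mu_M = mu_N o g *)
  (forall (M N : col) (g : pt M -> pt N) (h : pt N -> pt M),
     col_iso M N g h ->
     forall m : pt M, Gam_map M N g h (mu M m) = mu N (g m)).
Proof.
  intros T HT1 _ _ _; split.
  - intros M; repeat split.
    + apply mu_Gam_test, HT1.
    + apply mu_inj.
    + apply Gam_test_mu.
    + apply mu_le_iff.
    + apply mu_le_iff.
    + intros m; symmetry; apply Gam_til_mu.
  - exact mu_natural.
Qed.
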